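(* Let $k_1,k_2$ be constants with $0<k_2\le 1$ and $8k_2^2+6k_1-3<0$. Let $J'=(z_w,z_w')$ be a nonempty open interval, let $r:J'\to\mathbb{R}$ be differentiable with $r(z)\neq 0$, $\dot r(z)<k_1$ and $|r(z)|<k_2$ for all $z\in J'$, and let $h:J'\to\mathbb{R}$ be differentiable with $\dot h(z)=1+h(z)^2-2r(z)h(z)$ on $J'$, having exactly one zero $z_*\in J'$. Let $G(z)=z-\dfrac{2h(z)}{2+h(z)^2-2r(z)h(z)}$. Then for every initial guess $z_0\in J'$ the iteration $z_{n+1}=G(z_n)$ is well defined and $(z_n)$ converges monotonically to $z_*$.
   Context: $\dot{}$ denotes differentiation with respect to $z$. ''Converges monotonically'' means all iterates lie in $J'$, the sequence is monotone, and its limit is $z_*$. *)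

From Stdlib Require Import Reals.
From Coquelicot Require Import Coquelicot.
Open Scope R_scope.

Definition Gmap (r h : R -> R) (z : R) : R :=
  z - 2 * h z / (2 + h z ^ 2 - 2 * r z * h z).

Definition Gden (r h : R -> R) (z : R) : R := 2 + h z ^ 2 - 2 * r z * h z.

Definition Giter (r h : R -> R) (z0 : R) (n : nat) : R := Nat.iter n (Gmap r h) z0.

From Stdlib Require Import Reals Lra Psatz.
From Coquelicot Require Import Coquelicot.
Open Scope R_scope.

(* Since |r| < 1, both h' = 1 + h^2 - 2 r h and the denominator of G are positive, so h is
   increasing: h < 0 left of z_* and h > 0 right of it, hence G moves every point towards z_*.
   A direct computation gives G' = h^2 (3 h^2 - 8 r h + 2 + 4 r^2 - 4 r') / (2 + h^2 - 2 r h)^2,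
   and the bounds on r and r' make the middle factor nonnegative, so G is nondecreasing and
   cannot jump over its fixed point z_*.  The iterates are therefore monotone and bounded by
   z_*, and their limit is a fixed point of the continuous map G, i.e. a zero of h. *)

Lemma nondecreasing_of_derive_nonneg (f df : R -> R) (a b : R) :
  (forall x, a < x < b -> is_derive f x (df x)) ->
  (forall x, a < x < b -> 0 <= df x) ->
  forall x y, a < x -> x <= y -> y < b -> f x <= f y.
Proof.
  intros Hf Hdf x y Hax Hxy Hyb.
  destruct (MVT_gen f x y df) as [c [Hc Hfc]].
  - rewrite Rmin_left, Rmax_right by lra.
    intros c Hc; apply Hf; lra.
  - rewrite Rmin_left, Rmax_right by lra.
    intros c Hc.
    apply continuity_pt_filterlim, (@ex_derive_continuous R_AbsRing R_NormedModule).
    eexists; apply Hf; lra.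
  - rewrite Rmin_left, Rmax_right in Hc by lra.
    assert (0 <= df c) by (apply Hdf; lra).
    nra.
Qed.

Lemma is_lim_seq_iter_fixpoint (f : R -> R) (z0 l : R) :
  continuous f l -> is_lim_seq (fun n => Nat.iter n f z0) l -> f l = l.
Proof.
  intros Hf Hl.
  assert (Hfl : is_lim_seq (fun n => f (Nat.iter n f z0)) (f l))
    by exact (filterlim_comp _ _ _ _ _ _ _ _ Hl Hf).
  apply is_lim_seq_incr_1 in Hl.
  apply is_lim_seq_unique in Hfl, Hl.
  simpl in Hl. rewrite Hfl in Hl. now injection Hl.
Qed.

Lemma iter_incr_cvg (f : R -> R) (a zs z0 : R) :
  (forall z, a < z <= zs -> z <= f z <= zs) ->
  (forall z, a < z <= zs -> continuous f z) ->
  (forall z, a < z <= zs -> f z = z -> z = zs) ->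
  a < z0 <= zs ->
  (forall n, z0 <= Nat.iter n f z0 <= zs) /\
  (forall n, Nat.iter n f z0 <= Nat.iter (S n) f z0) /\
  is_lim_seq (fun n => Nat.iter n f z0) zs.
Proof.
  intros Htrap Hcont Hfix Hz0.
  set (u n := Nat.iter n f z0).
  assert (Hbd : forall n, z0 <= u n <= zs).
  { induction n as [|n IH]; simpl; [lra|].
    pose proof (Htrap (u n) ltac:(lra)). fold (u n); lra. }
  assert (Hinc : forall n, u n <= u (S n)).
  { intros n. apply (Htrap (u n)). pose proof (Hbd n); lra. }
  destruct (ex_finite_lim_seq_incr u zs Hinc (fun n => proj2 (Hbd n))) as [l Hl].
  assert (Hz0l : z0 <= l) by exact (is_lim_seq_incr_compare u l Hl Hinc 0).
  assert (Hlzs : l <= zs)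
    by exact (is_lim_seq_le u (fun _ => zs) l zs (fun n => proj2 (Hbd n)) Hl
                (is_lim_seq_const zs)).
  assert (l = zs) as <-.
  { apply Hfix; [lra|]. apply (is_lim_seq_iter_fixpoint f z0); [apply Hcont; lra | exact Hl]. }
  repeat split; auto; apply Hbd.
Qed.

(* The decreasing case is the increasing one for the conjugate map z |-> - f (- z). *)
Lemma iter_decr_cvg (f : R -> R) (b zs z0 : R) :
  (forall z, zs <= z < b -> zs <= f z <= z) ->
  (forall z, zs <= z < b -> continuous f z) ->
  (forall z, zs <= z < b -> f z = z -> z = zs) ->
  zs <= z0 < b ->
  (forall n, zs <= Nat.iter n f z0 <= z0) /\
  (forall n, Nat.iter (S n) f z0 <= Nat.iter n f z0) /\
  is_lim_seq (fun n => Nat.iter n f z0) zs.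
Proof.
  intros Htrap Hcont Hfix Hz0.
  set (g z := - f (- z)).
  assert (Hiter : forall n, Nat.iter n g (- z0) = - Nat.iter n f z0).
  { induction n as [|n IH]; simpl; [reflexivity|].
    rewrite IH. unfold g. now rewrite Ropp_involutive. }
  destruct (iter_incr_cvg g (- b) (- zs) (- z0)) as [Hbd [Hinc Hlim]].
  - intros z Hz. unfold g. pose proof (Htrap (- z) ltac:(lra)). lra.
  - intros z Hz.
    apply (@continuous_opp _ _ R_NormedModule (fun z => f (- z))), continuous_comp.
    + apply (@continuous_opp _ _ R_NormedModule (fun z => z)), continuous_id.
    + apply Hcont. lra.
  - intros z Hz Hgz. unfold g in Hgz.
    enough (- z = zs) by lra. apply Hfix; lra.
  - lra.
  - split; [|split].
    + intros n. pose proof (Hbd n). rewrite Hiter in *. lra.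
    + intros n. pose proof (Hinc n). rewrite !Hiter in *. lra.
    + apply is_lim_seq_opp in Hlim. simpl in Hlim. rewrite Ropp_involutive in Hlim.
      eapply is_lim_seq_ext; [|exact Hlim]. intros n. simpl. rewrite Hiter. lra.
Qed.

Lemma riccati_rhs_pos (r x : R) : Rabs r < 1 -> 0 < 1 + x ^ 2 - 2 * r * x.
Proof.
  intros Hr. apply Rabs_def2 in Hr.
  assert (r ^ 2 < 1) by nra.
  pose proof (pow2_ge_0 (x - r)). nra.
Qed.

Lemma Gden_pos (r h : R -> R) (z : R) : Rabs (r z) < 1 -> 0 < Gden r h z.
Proof. intros Hr. pose proof (riccati_rhs_pos (r z) (h z) Hr). unfold Gden. lra. Qed.

Lemma Gmap_sub (r h : R -> R) (z : R) : Gmap r h z - z = - 2 * h z / Gden r h z.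
Proof. unfold Gmap, Gden, Rdiv. ring. Qed.

Lemma is_derive_Gmap (r h : R -> R) (z : R) :
  ex_derive r z -> is_derive h z (1 + h z ^ 2 - 2 * r z * h z) -> Gden r h z <> 0 ->
  is_derive (Gmap r h) z
    (h z ^ 2 * (3 * h z ^ 2 - 8 * r z * h z + 2 + 4 * r z ^ 2 - 4 * Derive r z)
     / Gden r h z ^ 2).
Proof.
  intros Hr Hh Hd. unfold Gden in Hd |- *. unfold Gmap.
  assert (Eh : Derive h z = 1 + h z ^ 2 - 2 * r z * h z) by now apply is_derive_unique.
  assert (Hh' : ex_derive h z) by (eexists; exact Hh).
  auto_derive.
  - intuition.
  - change (Derive (fun x => h x) z) with (Derive h z).
    change (Derive (fun x => r x) z) with (Derive r z).
    rewrite Eh. now field.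
Qed.

(* 3 x^2 - 8 r x + 2 + 4 r^2 - 4 d = 3 (x - 4 r / 3)^2 + 2 (3 - 2 r^2 - 6 d) / 3 *)
Lemma Gmap_derive_num_nonneg (r d x : R) :
  2 * r ^ 2 + 6 * d <= 3 -> 0 <= 3 * x ^ 2 - 8 * r * x + 2 + 4 * r ^ 2 - 4 * d.
Proof. intros Hrd. pose proof (pow2_ge_0 (x - 4 / 3 * r)). nra. Qed.

Section RiccatiIteration.

Variables (r h : R -> R) (zw zw' zs : R).

Hypothesis r_lt1 : forall z, zw < z < zw' -> Rabs (r z) < 1.
Hypothesis r_derivable : forall z, zw < z < zw' -> ex_derive r z.
Hypothesis r_derive_bound : forall z, zw < z < zw' -> 2 * r z ^ 2 + 6 * Derive r z <= 3.
Hypothesis h_riccati :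
  forall z, zw < z < zw' -> is_derive h z (1 + h z ^ 2 - 2 * r z * h z).
Hypothesis zs_in : zw < zs < zw'.
Hypothesis h_zs : h zs = 0.
Hypothesis h_zero_uniq : forall z, zw < z < zw' -> h z = 0 -> z = zs.

Lemma Gden_neq0 (z : R) : zw < z < zw' -> Gden r h z <> 0.
Proof. intros Hz. apply Rgt_not_eq, Gden_pos, r_lt1, Hz. Qed.

Lemma h_nondecreasing (x y : R) : zw < x -> x <= y -> y < zw' -> h x <= h y.
Proof.
  apply (nondecreasing_of_derive_nonneg h (fun z => 1 + h z ^ 2 - 2 * r z * h z)
           zw zw' h_riccati).
  intros z Hz. left. now apply riccati_rhs_pos, r_lt1.
Qed.

Lemma Gmap_nondecreasing (x y : R) :
  zw < x -> x <= y -> y < zw' -> Gmap r h x <= Gmap r h y.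
Proof.
  eapply (nondecreasing_of_derive_nonneg (Gmap r h) _ zw zw').
  - intros z Hz. apply is_derive_Gmap; auto.
    now apply Gden_neq0.
  - intros z Hz. apply Rdiv_le_0_compat.
    + apply Rmult_le_pos; [apply pow2_ge_0|].
      now apply Gmap_derive_num_nonneg, r_derive_bound.
    + apply pow2_gt_0, Gden_neq0, Hz.
Qed.

Lemma Gmap_continuous (z : R) : zw < z < zw' -> continuous (Gmap r h) z.
Proof.
  intros Hz. apply (@ex_derive_continuous R_AbsRing R_NormedModule).
  eexists. apply is_derive_Gmap; auto.
  now apply Gden_neq0.
Qed.

Lemma Gmap_fixpoint (z : R) : zw < z < zw' -> Gmap r h z = z -> z = zs.
Proof.
  intros Hz HGz. apply h_zero_uniq; [exact Hz|].
  pose proof (Gden_pos r h z (r_lt1 z Hz)) as Hd.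
  pose proof (Gmap_sub r h z) as HG. rewrite HGz, Rminus_diag in HG.
  apply (Rmult_eq_reg_r (/ Gden r h z)); [|apply Rinv_neq_0_compat; lra].
  unfold Rdiv in HG. lra.
Qed.

Lemma Gmap_zs : Gmap r h zs = zs.
Proof. unfold Gmap. rewrite h_zs. unfold Rdiv. ring. Qed.

Lemma Gmap_trap_left (z : R) : zw < z <= zs -> z <= Gmap r h z <= zs.
Proof.
  intros Hz. split.
  - pose proof (Gden_pos r h z (r_lt1 z ltac:(lra))).
    pose proof (h_nondecreasing z zs ltac:(lra) ltac:(lra) ltac:(lra)).
    pose proof (Gmap_sub r h z). unfold Rdiv in *.
    assert (0 <= - 2 * h z * / Gden r h z)
      by (apply Rmult_le_pos; [lra | left; now apply Rinv_0_lt_compat]).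
    lra.
  - rewrite <- Gmap_zs. apply Gmap_nondecreasing; lra.
Qed.

Lemma Gmap_trap_right (z : R) : zs <= z < zw' -> zs <= Gmap r h z <= z.
Proof.
  intros Hz. split.
  - rewrite <- Gmap_zs at 1. apply Gmap_nondecreasing; lra.
  - pose proof (Gden_pos r h z (r_lt1 z ltac:(lra))).
    pose proof (h_nondecreasing zs z ltac:(lra) ltac:(lra) ltac:(lra)).
    pose proof (Gmap_sub r h z). unfold Rdiv in *.
    assert (0 <= 2 * h z * / Gden r h z)
      by (apply Rmult_le_pos; [lra | left; now apply Rinv_0_lt_compat]).
    lra.
Qed.

Lemma Giter_monotone_cvg (z0 : R) : zw < z0 < zw' ->
  (forall n, zw < Giter r h z0 n < zw') /\
  (forall n, Gden r h (Giter r h z0 n) <> 0) /\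
  ((forall n, Giter r h z0 n <= Giter r h z0 (S n)) \/
   (forall n, Giter r h z0 (S n) <= Giter r h z0 n)) /\
  is_lim_seq (Giter r h z0) zs.
Proof.
  intros Hz0.
  destruct (Rle_lt_dec z0 zs) as [Hle | Hlt].
  - destruct (iter_incr_cvg (Gmap r h) zw zs z0) as [Hbd [Hinc Hlim]].
    + exact Gmap_trap_left.
    + intros z Hz. apply Gmap_continuous. lra.
    + intros z Hz. apply Gmap_fixpoint. lra.
    + lra.
    + assert (Hin : forall n, zw < Giter r h z0 n < zw')
        by (intros n; specialize (Hbd n); unfold Giter; lra).
      split; [exact Hin | split; [intros n; apply Gden_neq0, Hin | split]].
      * left; exact Hinc.
      * exact Hlim.
  - destruct (iter_decr_cvg (Gmap r h) zw' zs z0) as [Hbd [Hdec Hlim]].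
    + exact Gmap_trap_right.
    + intros z Hz. apply Gmap_continuous. lra.
    + intros z Hz. apply Gmap_fixpoint. lra.
    + lra.
    + assert (Hin : forall n, zw < Giter r h z0 n < zw')
        by (intros n; specialize (Hbd n); unfold Giter; lra).
      split; [exact Hin | split; [intros n; apply Gden_neq0, Hin | split]].
      * right; exact Hdec.
      * exact Hlim.
Qed.

End RiccatiIteration.

Theorem mainTheorem8
  (k1 k2 zw zw' : R) (r h : R -> R) (zs : R)
  (Hk2 : 0 < k2 <= 1)
  (Hk : 8 * k2 ^ 2 + 6 * k1 - 3 < 0)
  (Hint : zw < zw')
  (Hr_diff : forall z, zw < z < zw' -> ex_derive r z)
  (Hr_ne0 : forall z, zw < z < zw' -> r z <> 0)
  (Hr_der : forall z, zw < z < zw' -> Derive r z < k1)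
  (Hr_bd : forall z, zw < z < zw' -> Rabs (r z) < k2)
  (Hh : forall z, zw < z < zw' -> is_derive h z (1 + h z ^ 2 - 2 * r z * h z))
  (Hzs : zw < zs < zw')
  (Hhzs : h zs = 0)
  (Huniq : forall z, zw < z < zw' -> h z = 0 -> z = zs) :
  forall z0, zw < z0 < zw' ->
    (forall n, zw < Giter r h z0 n < zw') /\
    (forall n, Gden r h (Giter r h z0 n) <> 0) /\
    ((forall n, Giter r h z0 n <= Giter r h z0 (S n)) \/
     (forall n, Giter r h z0 (S n) <= Giter r h z0 n)) /\
    is_lim_seq (Giter r h z0) zs.
Proof.
  apply Giter_monotone_cvg; auto.
  - intros z Hz. specialize (Hr_bd z Hz). lra.
  - intros z Hz. specialize (Hr_der z Hz).
    destruct (Rabs_def2 _ _ (Hr_bd z Hz)). nra.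
Qed.
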